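(* Under the setting and conditions of the context, suppose in addition that the base procedure satisfies $\mathbb{E}[\mathrm{Regret}_T^{\mathrm{base}}(a,b)]=\Omega(T)$. Then $\mathbb{E}[\mathrm{Regret}_T^{\mathrm{DOMT}}(a,b)]=\mathbb{E}[\mathrm{Regret}_T^{\mathrm{base}}(a,b)]+\mathcal{O}(\sqrt T)$, and $\mathbb{E}[\mathrm{Regret}_T^{\mathrm{DOMT}}(a,b)]=\Theta(T)$.
   Context: Data model: states $Y_t\in\{0,1\}$; conditionally on the states and the past, $p_t\sim\mathrm{Uniform}[0,1]$ if $Y_t=0$ and $p_t\sim G$ if $Y_t=1$, where $G$ is a continuous strictly increasing CDF on $[0,1]$, $G(0)=0,G(1)=1$, and $G$ is $L$-Lipschitz for some $L\ge1$. A base procedure computes $\lambda_t^{\mathrm{base}}\in[0,1]$ from the virtual history $(p_s,\lambda_s^{\mathrm{base}},\delta_s^{\mathrm{base}})_{s\le t-1}$, virtual decisions $\delta_t^{\mathrm{base}}=\mathbf{1}\{p_t\le\lambda_t^{\mathrm{base}}\}$, and there is $\eta>0$ with $\liminf_T R_T^{\mathrm{base}}/T\ge\eta$ a.s., where $R_T^{\mathrm{base}}=\sum_{t\le T}\delta_t^{\mathrm{base}}$. DOMT with $\kappa\ge0$, $\alpha\in(0,1)$: $Z_t$ i.i.d. $\mathrm{Uniform}[0,1]$ independent of everything else, $\epsilon_t=\kappa\alpha/\sqrt t$, $\xi_t=\epsilon_tZ_t$, $\lambda_t=\min(1,\lambda_t^{\mathrm{base}}+\xi_t)$, actual decisions $\delta_t=\mathbf{1}\{p_t\le\lambda_t\}$;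 base state updated only with $\delta^{\mathrm{base}}$. For decisions $d_t$: $V_T=\sum_{t\le T}\mathbf{1}\{Y_t=0,d_t=1\}$, $M_T=\sum_{t\le T}\mathbf{1}\{Y_t=1,d_t=0\}$, $\mathrm{Regret}_T(a,b)=aV_T+bM_T$ with $a,b>0$; base uses $d_t=\delta_t^{\mathrm{base}}$, DOMT uses $d_t=\delta_t$. *)

From HB Require Import structures.
From mathcomp Require Import all_boot all_order all_algebra.
From mathcomp Require Import all_classical all_reals all_analysis.
Set Implicit Arguments. Unset Strict Implicit. Unset Printing Implicit Defensive.
Import Order.TTheory GRing.Theory Num.Theory.
Local Open Scope classical_set_scope.
Local Open Scope ring_scope.

(* Time is indexed by t = 1, 2, 3, ...; index 0 is unused. *)

Section DOMT.
Context {R : realType} {d : measure_display} {Omega : measurableType d}.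

Definition eps (kappa alpha : R) (t : nat) : R := kappa * alpha / Num.sqrt t%:R.

Definition lamD (kappa alpha : R) (lb Z : nat -> Omega -> R) (t : nat) (w : Omega) : R :=
  Num.min 1 (lb t w + eps kappa alpha t * Z t w).

Definition decB (p lb : nat -> Omega -> R) (t : nat) (w : Omega) : bool :=
  p t w <= lb t w.

Definition decD (kappa alpha : R) (p lb Z : nat -> Omega -> R) (t : nat) (w : Omega) : bool :=
  p t w <= lamD kappa alpha lb Z t w.

(* V_T: false discoveries (Y_t = 0, d_t = 1); Y_t = true encodes Y_t = 1 *)
Definition Vcount (Y : nat -> Omega -> bool) (dd : nat -> Omega -> bool) (T : nat) (w : Omega) : R :=
  \sum_(1 <= t < T.+1) ((~~ Y t w) && dd t w)%:R.

Definition Mcount (Y : nat -> Omega -> bool) (dd : nat -> Omega -> bool) (T : nat) (w : Omega) : R :=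
  \sum_(1 <= t < T.+1) (Y t w && ~~ dd t w)%:R.

Definition Regret (a b : R) (Y : nat -> Omega -> bool) (dd : nat -> Omega -> bool)
  (T : nat) (w : Omega) : R :=
  a * Vcount Y dd T w + b * Mcount Y dd T w.

Definition Rcount (dd : nat -> Omega -> bool) (T : nat) (w : Omega) : R :=
  \sum_(1 <= t < T.+1) (dd t w)%:R.

Definition Expect (P : probability Omega R) (f : Omega -> R) : R :=
  fine (\int[P]_w (f w)%:E)%E.

Definition states_past_gen (Y : nat -> Omega -> bool) (p : nat -> Omega -> R) (t : nat)
  : set (set Omega) :=
  [set A | (exists s, (1 <= s)%N /\ A = [set w | Y s w]) \/
           (exists s (B : set R), (1 <= s < t)%N /\ measurable B /\ A = p s @^-1` B)].

(* generators of sigma(p_s, 1 <= s < t): the virtual history of the base procedure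
   (lambda_s^base and delta_s^base are themselves functions of past p-values) *)
Definition past_p_gen (p : nat -> Omega -> R) (t : nat) : set (set Omega) :=
  [set A | exists s (B : set R), (1 <= s < t)%N /\ measurable B /\ A = p s @^-1` B].

Definition all_Yp_gen (Y : nat -> Omega -> bool) (p : nat -> Omega -> R) : set (set Omega) :=
  [set A | (exists s, (1 <= s)%N /\ A = [set w | Y s w]) \/
           (exists s (B : set R), (1 <= s)%N /\ measurable B /\ A = p s @^-1` B)].

End DOMT.

From HB Require Import structures.
From mathcomp Require Import all_boot all_order all_algebra.
From mathcomp Require Import all_classical all_reals all_analysis.
From mathcomp Require Import measurable_realfun ring lra.
Import Order.TTheory GRing.Theory Num.Theory numFieldNormedType.Exports.
Local Open Scope classical_set_scope.
Local Open Scope ring_scope.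

(* The DOMT decision at time t differs from the base decision only when p_t falls in the
   window (lambda_t^base, lambda_t^base + eps_t], up to the null event Z_t outside [0,1].
   Conditionally on the states and the past, which determine lambda_t^base, the law of p_t
   is a mixture of the uniform law and G, hence has an L-Lipschitz cdf; slicing the range
   of lambda_t^base into t slices of width 1/t bounds the probability of the window by
   L (1/t + eps_t) = O(1/sqrt t).  Each time step changes the regret by at most a + b with
   that probability, so the expected regrets differ by O(sum_t 1/sqrt t) = O(sqrt T); the
   linear lower bound on the base regret and the trivial bound (a + b) T then give Theta(T). *)

Section measurable_events.
Context {d : measure_display} {Omega : measurableType d} {R : realType}.
Implicit Types (f g : Omega -> R) (u v : Omega -> bool).

Lemma measurable_ler {f g} : measurable_fun setT f -> measurable_fun setT g ->
  measurable [set w | f w <= g w].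
Proof.
by move=> mf mg; rewrite -[X in measurable X]setTI; exact: measurable_fun_ler.
Qed.

Lemma measurable_ltr {f g} : measurable_fun setT f -> measurable_fun setT g ->
  measurable [set w | f w < g w].
Proof.
by move=> mf mg; rewrite -[X in measurable X]setTI; exact: measurable_fun_ltr.
Qed.

Lemma measurable_negb {u} : measurable [set w | u w] -> measurable [set w | ~~ u w].
Proof.
move=> mu; rewrite (_ : [set w | ~~ u w] = ~` [set w | u w]); first exact: measurableC.
by apply/seteqP; split=> w /=; case: (u w).
Qed.

Lemma measurable_andb {u v} : measurable [set w | u w] -> measurable [set w | v w] ->
  measurable [set w | u w && v w].
Proof.
move=> mu mv; rewrite (_ : [set w | u w && v w] = [set w | u w] `&` [set w | v w]).
  exact: measurableI.
by apply/seteqP; split=> w /=; [move/andP|move=> [-> ->]].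
Qed.

Lemma measurable_orb {u v} : measurable [set w | u w] -> measurable [set w | v w] ->
  measurable [set w | u w || v w].
Proof.
move=> mu mv; rewrite (_ : [set w | u w || v w] = [set w | u w] `|` [set w | v w]).
  exact: measurableU.
by apply/seteqP; split=> w /=; [move/orP|case=> ->; rewrite ?orbT].
Qed.

Lemma measurable_neqb {u v} : measurable [set w | u w] -> measurable [set w | v w] ->
  measurable [set w | u w != v w].
Proof.
move=> mu mv; rewrite (_ : [set w | u w != v w] =
  [set w | u w && ~~ v w] `|` [set w | v w && ~~ u w]).
  by apply: measurableU; apply: measurable_andb => //; exact: measurable_negb.
by apply/seteqP; split=> w /=; case: (u w); case: (v w) => //=; by [left|right|case].
Qed.

End measurable_events.

Section real_probability.
Context {R : realType} {d : measure_display} {Omega : measurableType d}.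
Variable P : probability Omega R.
Implicit Types (S A : set Omega).

Definition Pr S : R := fine (P S).

Lemma PrE S : measurable S -> P S = (Pr S)%:E.
Proof. by move=> mS; rewrite /Pr fineK // fin_num_measure. Qed.

Lemma Pr_ge0 S : measurable S -> 0 <= Pr S.
Proof. by move=> mS; rewrite -lee_fin -PrE. Qed.

Lemma Pr_le1 S : measurable S -> Pr S <= 1.
Proof. by move=> mS; rewrite -lee_fin -PrE // probability_le1. Qed.

Lemma Pr_setT : Pr setT = 1.
Proof. by rewrite /Pr probability_setT. Qed.

Lemma Pr_setC S : measurable S -> Pr (~` S) = 1 - Pr S.
Proof.
move=> mS; apply: EFin_inj; rewrite EFinB -(PrE _ mS) -PrE; last exact: measurableC.
exact: probability_setC.
Qed.

Lemma le_Pr S1 S2 : measurable S1 -> measurable S2 -> S1 `<=` S2 -> Pr S1 <= Pr S2.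
Proof.
by move=> m1 m2 S12; rewrite -lee_fin -!PrE //; apply: le_measure => //; exact/mem_set.
Qed.

Lemma le_Pr_setU S S1 S2 : measurable S -> measurable S1 -> measurable S2 ->
  S `<=` S1 `|` S2 -> Pr S <= Pr S1 + Pr S2.
Proof.
move=> mS m1 m2 sub; have m12 : measurable (S1 `|` S2) by exact: measurableU.
apply: le_trans (le_Pr _ _ mS m12 sub) _.
by rewrite -lee_fin EFinD -!PrE //; exact: measureU2.
Qed.

Lemma Pr_dist_le S1 S2 D : measurable S1 -> measurable S2 -> measurable D ->
  S1 `<=` S2 `|` D -> S2 `<=` S1 `|` D -> `|Pr S1 - Pr S2| <= Pr D.
Proof.
move=> m1 m2 mD S12 S21; have := le_Pr_setU _ _ _ m1 m2 mD S12.
by have := le_Pr_setU _ _ _ m2 m1 mD S21; rewrite ler_norml; lra.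
Qed.

Lemma Pr_setU S1 S2 : measurable S1 -> measurable S2 -> S1 `&` S2 = set0 ->
  Pr (S1 `|` S2) = Pr S1 + Pr S2.
Proof.
move=> m1 m2 dis; apply: EFin_inj.
by rewrite EFinD -!PrE ?measureU //; exact: measurableU.
Qed.

Lemma Pr_bigsetU (F : nat -> set Omega) n : (forall i, measurable (F i)) ->
  trivIset setT F -> Pr (\big[setU/set0]_(i < n) F i) = \sum_(i < n) Pr (F i).
Proof.
move=> mF tF; apply: EFin_inj; rewrite -sumEFin -PrE; last exact: bigsetU_measurable.
by rewrite measure_bigsetU //; apply: eq_bigr => i _; exact: PrE.
Qed.

Lemma Pr_setI_split A (u : Omega -> bool) : measurable A -> measurable [set w | u w] ->
  Pr (A `&` [set w | ~~ u w]) + Pr (A `&` [set w | u w]) = Pr A.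
Proof.
move=> mA mu; rewrite -Pr_setU; last 3 first.
- by apply: measurableI => //; exact: measurable_negb.
- exact: measurableI.
- by apply/seteqP; split=> w //= [][_ /negP + [_]].
by congr Pr; apply/seteqP; split=> w /=; [case=> [][]|case: (u w); [right|left]].
Qed.

Lemma Pr_gt_eq0 (q : Omega -> R) c : measurable_fun setT q ->
  Pr [set w | q w <= c] = 1 -> Pr [set w | c < q w] = 0.
Proof.
move=> mq Pq; have mle := measurable_ler mq (measurable_cst c).
rewrite (_ : [set w | c < q w] = ~` [set w | q w <= c]) ?Pr_setC ?Pq ?subrr //.
by apply/seteqP; split=> w /=; rewrite ltNge => /negP.
Qed.

Lemma Pr_uniform_outside_unit (X : Omega -> R) : measurable_fun setT X ->
  (forall c, 0 <= c <= 1 -> P [set w | X w <= c] = c%:E) ->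
  Pr [set w | (X w < 0) || (1 < X w)] = 0.
Proof.
move=> mX X_cdf; have mle c := measurable_ler mX (measurable_cst c).
have unit0 : 0 <= (0 : R) <= 1 by rewrite lexx ler01.
have unit1 : 0 <= (1 : R) <= 1 by rewrite ler01 lexx.
have P0 : Pr [set w | X w <= 0] = 0 by rewrite /Pr X_cdf.
have P1 : Pr [set w | 1 < X w] = 0 by apply: Pr_gt_eq0; rewrite // /Pr X_cdf.
have sub : [set w | (X w < 0) || (1 < X w)] `<=` [set w | X w <= 0] `|` [set w | 1 < X w].
  by move=> w /orP[/ltW|]; [left|right].
have mgt c : measurable [set w | c < X w] := measurable_ltr (measurable_cst c) mX.
have mout : measurable [set w | (X w < 0) || (1 < X w)].
  by apply: measurable_orb => //; exact: measurable_ltr.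
apply/eqP; rewrite eq_le Pr_ge0 // andbT.
by apply: le_trans (le_Pr_setU _ _ _ mout (mle 0) (mgt 1) sub) _; rewrite P0 P1 addr0.
Qed.

End real_probability.

Section conditional_cdf.
Context {R : realType} {d : measure_display} {Omega : measurableType d}.
Variables (P : probability Omega R) (y : Omega -> bool) (q : Omega -> R)
  (G : R -> R) (L : R) (Sg : set (set Omega)).
Hypotheses (my : measurable [set w | y w]) (mq : measurable_fun setT q)
  (SgM : Sg `<=` measurable) (SgT : Sg setT) (G1 : G 1 = 1) (L1 : 1 <= L)
  (G_lip : forall x z, 0 <= x <= 1 -> 0 <= z <= 1 -> `|G x - G z| <= L * `|x - z|)
  (q_cdf : forall A, Sg A -> forall x, 0 <= x <= 1 ->
     P (A `&` [set w | q w <= x]) =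
       (P (A `&` [set w | ~~ y w]) * x%:E + P (A `&` [set w | y w]) * (G x)%:E)%E).

Let mq_le c : measurable [set w | q w <= c] := measurable_ler mq (measurable_cst c).
Let mq_gt c : measurable [set w | c < q w] := measurable_ltr (measurable_cst c) mq.

Lemma Pr_cdf A x : Sg A -> 0 <= x <= 1 ->
  Pr P (A `&` [set w | q w <= x]) =
  Pr P (A `&` [set w | ~~ y w]) * x + Pr P (A `&` [set w | y w]) * G x.
Proof.
move=> SA x01; have mA := SgM _ SA.
have mAy : measurable (A `&` [set w | y w]) by exact: measurableI.
have mAny : measurable (A `&` [set w | ~~ y w]) by apply: measurableI => //; exact: measurable_negb.
have mAq : measurable (A `&` [set w | q w <= x]) by exact: measurableI.
by apply: EFin_inj; rewrite EFinD !EFinM -!PrE // q_cdf.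
Qed.

Lemma Pr_gt1_eq0 : Pr P [set w | 1 < q w] = 0.
Proof.
have unit1 : 0 <= (1 : R) <= 1 by rewrite ler01 lexx.
apply: Pr_gt_eq0 => //.
by have := Pr_cdf _ _ SgT unit1; rewrite G1 !mulr1 Pr_setI_split // Pr_setT setTI.
Qed.

Let mq_oc x z : measurable [set w | x < q w <= z] := measurable_andb (mq_gt x) (mq_le z).

Lemma Pr_oc_le_unit A x z : Sg A -> 0 <= x -> x <= z -> z <= 1 ->
  Pr P (A `&` [set w | x < q w <= z]) <= L * Pr P A * (z - x).
Proof.
move=> SA x0 xz z1; have mA := SgM _ SA.
have split_z : Pr P (A `&` [set w | q w <= z]) =
    Pr P (A `&` [set w | q w <= x]) + Pr P (A `&` [set w | x < q w <= z]).
  rewrite -Pr_setU; [|exact: measurableI|exact: measurableI|]; last first.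
    by apply/seteqP; split=> w //= [][_ qx] [_ /andP[/(le_lt_trans qx)]]; rewrite ltxx.
  congr Pr; apply/seteqP; split=> w /=.
    by case=> Aw qz; case: (leP (q w) x) => qx; [left|right; split=> //=; rewrite qx qz].
  by case=> -[Aw]; [move=> qx; split=> //; exact: le_trans qx xz|case/andP].
have x01 : 0 <= x <= 1 by rewrite x0 (le_trans xz z1).
have z01 : 0 <= z <= 1 by rewrite (le_trans x0 xz) z1.
rewrite !Pr_cdf // in split_z.
have dG : G z - G x <= L * (z - x).
  apply: le_trans (ler_norm _) _.
  by rewrite -[z - x]ger0_norm ?subr_ge0 //; exact: G_lip.
have := Pr_setI_split P A y mA my.
set a := Pr P (A `&` [set w | ~~ y w]) in split_z *.
set b := Pr P (A `&` [set w | y w]) in split_z *.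
move=> <-.
have a0 : 0 <= a by apply: Pr_ge0; apply: measurableI => //; exact: measurable_negb.
have b0 : 0 <= b by apply: Pr_ge0; exact: measurableI.
have hb : b * (G z - G x) <= b * (L * (z - x)) by exact: ler_wpM2l.
have ha : a * (z - x) <= a * (L * (z - x)).
  by apply: ler_wpM2l => //; apply: ler_peMl => //; rewrite subr_ge0.
lra.
Qed.

Lemma Pr_oc_le A x z : Sg A -> 0 <= x <= 1 -> x <= z ->
  Pr P (A `&` [set w | x < q w <= z]) <= L * Pr P A * (z - x).
Proof.
move=> SA /andP[x0 x1] xz; have mA := SgM _ SA; pose z1 := Num.min z 1.
have sub : A `&` [set w | x < q w <= z] `<=`
    (A `&` [set w | x < q w <= z1]) `|` [set w | 1 < q w].
  move=> w /= [Aw /andP[xq qz]]; case: (leP (q w) 1) => q1; last by right.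
  by left; rewrite /z1 le_min xq qz q1.
have mz1 : measurable (A `&` [set w | x < q w <= z1]) by exact: measurableI.
apply: le_trans (le_Pr_setU _ _ _ _ _ mz1 (mq_gt 1) sub) _; first exact: measurableI.
rewrite Pr_gt1_eq0 addr0; apply: le_trans (Pr_oc_le_unit _ _ _ SA x0 _ _) _.
- by rewrite le_min xz x1.
- by rewrite ge_min lexx orbT.
apply: ler_wpM2l; first by rewrite mulr_ge0 ?Pr_ge0 // (le_trans ler01).
by rewrite lerD2r ge_min lexx.
Qed.

Let measurable_window (lbt : Omega -> R) e : measurable_fun setT lbt ->
  measurable [set w | lbt w < q w <= lbt w + e].
Proof.
move=> mlbt; apply: measurable_andb; first exact: measurable_ltr.
exact/measurable_ler/measurable_funD.
Qed.

Lemma Pr_threshold_window_le (lbt : Omega -> R) (e : R) (N : nat) :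
  (forall w, 0 <= lbt w <= 1) -> (forall B, measurable B -> Sg (lbt @^-1` B)) ->
  0 <= e -> (0 < N)%N ->
  Pr P [set w | lbt w < q w <= lbt w + e] <= L * (N%:R^-1 + e).
Proof.
move=> lbt01 lbtSg e0 N0; have N0' : 0 < N%:R :> R by rewrite ltr0n.
have mlbt : measurable_fun setT lbt by move=> _ B mB; rewrite setTI; apply: SgM; exact: lbtSg.
(* lbt is only Sg-measurable: on each slice {k/N <= lbt < (k+1)/N} the window lies in an
   interval of length 1/N + e with endpoints independent of w, where q_cdf applies. *)
pose slot k := lbt @^-1` [set` `[k%:R / N%:R, k.+1%:R / N%:R[%R].
pose F k := slot k `&` [set w | k%:R / N%:R < q w <= k.+1%:R / N%:R + e].
have Sg_slot k : Sg (slot k) by apply: lbtSg; exact: measurable_itv.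
have mslot k : measurable (slot k) by exact: SgM.
have mF k : measurable (F k) by exact: measurableI.
have slotE k w : slot k w -> Num.truncn (lbt w * N%:R) = k.
  rewrite /slot /= in_itv /= ler_pdivrMr // ltr_pdivlMr //; exact: truncn_def.
have tslot : trivIset setT slot.
  by move=> i j _ _ [w [/slotE <- /slotE <-]].
have tF : trivIset setT F by move=> i j _ _ [w [[Fi _] [Fj _]]]; apply: tslot => //; exists w.
have cover : [set w | lbt w < q w <= lbt w + e] `<=` \big[setU/set0]_(k < N.+1) F k.
  move=> w /andP[lq ql]; rewrite -bigcup_mkord; have /andP[l0 l1] := lbt01 w.
  have /andP[kl lk] := truncn_itv (mulr_ge0 l0 (ltW N0')).
  exists (Num.truncn (lbt w * N%:R)) => /=.
    by rewrite ltnS -(ler_nat R); apply: le_trans kl _; rewrite ler_piMl // ltW.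
  rewrite -ler_pdivrMr // -ltr_pdivlMr // in kl lk.
  split; first by rewrite /slot /= in_itv /= kl lk.
  by rewrite /= (le_lt_trans kl lq) (le_trans ql) // lerD2r ltW.
have F_le (k : 'I_N.+1) : Pr P (F k) <= L * (N%:R^-1 + e) * Pr P (slot k).
  have kN1 : 0 <= (k%:R / N%:R : R) <= 1.
    by rewrite divr_ge0 //= ler_pdivrMr // mul1r ler_nat -ltnS.
  have kk : k%:R / N%:R <= k.+1%:R / N%:R + e.
    by rewrite -[X in X <= _]addr0 lerD // ler_pM2r ?invr_gt0 // ler_nat.
  apply: le_trans (Pr_oc_le _ _ _ (Sg_slot k) kN1 kk) _.
  have -> : k.+1%:R / N%:R + e - k%:R / N%:R = N%:R^-1 + e :> R.
    by rewrite -natr1 mulrDl mul1r; lra.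
  by rewrite mulrAC.
apply: le_trans (le_Pr _ _ _ _ _ cover) _.
- exact: measurable_window.
- exact: bigsetU_measurable.
rewrite Pr_bigsetU //; apply: le_trans (ler_sum _ (fun k _ => F_le k)) _.
rewrite -mulr_sumr -Pr_bigsetU // ler_piMr ?Pr_le1 //; last exact: bigsetU_measurable.
by rewrite mulr_ge0 ?addr_ge0 ?invr_ge0 // (le_trans ler01).
Qed.

Lemma Pr_perturbed_threshold_neq_le (lbt Zt : Omega -> R) (e : R) (N : nat) :
  (forall w, 0 <= lbt w <= 1) -> (forall B, measurable B -> Sg (lbt @^-1` B)) ->
  measurable_fun setT Zt -> Pr P [set w | (Zt w < 0) || (1 < Zt w)] = 0 ->
  0 <= e -> (0 < N)%N ->
  Pr P [set w | (q w <= Num.min 1 (lbt w + e * Zt w)) != (q w <= lbt w)] <=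
  L * (N%:R^-1 + e).
Proof.
move=> lbt01 lbtSg mZt Znull e0 N0.
have mlbt : measurable_fun setT lbt by move=> _ B mB; rewrite setTI; apply: SgM; exact: lbtSg.
have sub : [set w | (q w <= Num.min 1 (lbt w + e * Zt w)) != (q w <= lbt w)] `<=`
    [set w | lbt w < q w <= lbt w + e] `|` [set w | (Zt w < 0) || (1 < Zt w)].
  move=> w /=; case: (boolP ((Zt w < 0) || (1 < Zt w))) => [_ _|]; first by right.
  rewrite negb_or -!leNgt => /andP[Z0 Z1] neq; left; move: neq.
  have /andP[eZ0 eZe] : 0 <= e * Zt w <= e by rewrite mulr_ge0 //= ler_piMr.
  have /andP[_ lb1] := lbt01 w.
  case: (leP (q w) (lbt w)) => [qlb|lbq].
    by rewrite le_min (le_trans qlb lb1) (le_trans qlb) ?lerDl.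
  by rewrite eqbF_neg negbK le_min => /andP[_ /le_trans]; apply; rewrite lerD2l.
apply: le_trans (le_Pr_setU _ _ _ _ _ _ _ sub) _.
- apply: measurable_neqb; last exact: measurable_ler.
  apply: measurable_ler => //; apply: measurable_minr; first exact: measurable_cst.
  by apply: measurable_funD => //; exact: measurable_funM.
- exact: measurable_window.
- by apply: measurable_orb; exact: measurable_ltr.
by rewrite Znull addr0; exact: Pr_threshold_window_le.
Qed.

End conditional_cdf.

Section regret.
Context {R : realType} {d : measure_display} {Omega : measurableType d}.
Variables (P : probability Omega R) (a b : R) (Y : nat -> Omega -> bool).
Hypotheses (a0 : 0 <= a) (b0 : 0 <= b) (mY : forall t, measurable [set w | Y t w]).

Let mV (dd : nat -> Omega -> bool) : (forall t, measurable [set w | dd t w]) ->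
  forall t, measurable [set w | ~~ Y t w && dd t w].
Proof. by move=> mdd t; apply: measurable_andb => //; exact: measurable_negb. Qed.

Let mM (dd : nat -> Omega -> bool) : (forall t, measurable [set w | dd t w]) ->
  forall t, measurable [set w | Y t w && ~~ dd t w].
Proof. by move=> mdd t; apply: measurable_andb => //; exact: measurable_negb. Qed.

Lemma Expect_sum_indic (m n : nat) (S1 S2 : nat -> set Omega) :
  (forall t, measurable (S1 t)) -> (forall t, measurable (S2 t)) ->
  Expect P (fun w => \sum_(m <= t < n) (a * \1_(S1 t) w + b * \1_(S2 t) w)) =
  \sum_(m <= t < n) (a * Pr P (S1 t) + b * Pr P (S2 t)).
Proof.
move=> mS1 mS2; rewrite /Expect.
have mterm (c : R) (S : set Omega) : measurable S ->
    measurable_fun setT (fun w => (c * \1_S w)%:E).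
  by move=> mS; apply/measurable_EFinP; apply: measurable_funM => //; exact: measurable_indic.
have term_ge0 (c : R) (S : set Omega) : 0 <= c ->
    forall w, setT w -> (0 <= (c * \1_S w)%:E)%E.
  by move=> c0 w _; rewrite lee_fin mulr_ge0.
have Eterm (c : R) (S : set Omega) : 0 <= c -> measurable S ->
    (\int[P]_w (c * \1_S w)%:E = (c * Pr P S)%:E)%E.
  move=> c0 mS; rewrite integralZl_indic //; last by move=> /(le_lt_trans c0); rewrite ltxx.
  by rewrite integral_indic // setIT EFinM -PrE.
under eq_integral do rewrite -sumEFin.
rewrite ge0_integral_sum //; last 2 first.
- by move=> t; apply/measurable_EFinP; apply: measurable_funD; exact/measurable_EFinP/mterm.
- by move=> t w _; rewrite lee_fin addr_ge0 ?mulr_ge0.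
rewrite (eq_bigr (fun t => (a * Pr P (S1 t) + b * Pr P (S2 t))%:E)) ?sumEFin //= => t _.
under eq_integral do rewrite EFinD.
rewrite ge0_integralD ?Eterm ?EFinD //.
all: first [exact: term_ge0 | exact: mterm | exact: mS1 | exact: mS2].
Qed.

Lemma Expect_Regret (dd : nat -> Omega -> bool) T : (forall t, measurable [set w | dd t w]) ->
  Expect P (Regret a b Y dd T) = \sum_(1 <= t < T.+1)
    (a * Pr P [set w | ~~ Y t w && dd t w] + b * Pr P [set w | Y t w && ~~ dd t w]).
Proof.
move=> mdd; rewrite -Expect_sum_indic; [|exact: mV|exact: mM].
congr Expect; apply: funext => w; rewrite /Regret /Vcount /Mcount !mulr_sumr -big_split.
by apply: eq_bigr => t _; rewrite !indicE !mem_setE.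
Qed.

Lemma Expect_Regret_le (dd : nat -> Omega -> bool) T :
  (forall t, measurable [set w | dd t w]) -> Expect P (Regret a b Y dd T) <= (a + b) * T%:R.
Proof.
move=> mdd; rewrite Expect_Regret //.
apply: le_trans (ler_sum_nat (G := fun _ => a + b) _) _; last first.
  by rewrite sumr_const_nat subn1 mulr_natr.
move=> t _; apply: lerD; rewrite ler_piMr // Pr_le1 //; first [exact: mV | exact: mM].
Qed.

Lemma Expect_Regret_dist_le (dd1 dd2 : nat -> Omega -> bool) T :
  (forall t, measurable [set w | dd1 t w]) -> (forall t, measurable [set w | dd2 t w]) ->
  `|Expect P (Regret a b Y dd1 T) - Expect P (Regret a b Y dd2 T)| <=
  (a + b) * \sum_(1 <= t < T.+1) Pr P [set w | dd1 t w != dd2 t w].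
Proof.
move=> m1 m2; rewrite !Expect_Regret // -sumrB mulr_sumr.
apply: le_trans (ler_norm_sum _ _ _) _; apply: ler_sum_nat => t _.
rewrite opprD addrACA -!mulrBr; apply: le_trans (ler_normD _ _) _.
rewrite !normrM (ger0_norm a0) (ger0_norm b0) mulrDl; apply: lerD; apply: ler_wpM2l => //.
all: apply: Pr_dist_le; first [exact: mV | exact: mM | exact: measurable_neqb | idtac].
all: by move=> w /=; case: (Y t w); case: (dd1 t w); case: (dd2 t w) => //=; by [left|right].
Qed.

End regret.

Lemma sum_inv_sqrt_le {R : realType} (T : nat) :
  \sum_(1 <= t < T.+1) (Num.sqrt (t%:R : R))^-1 <= 2 * Num.sqrt (T%:R : R).
Proof.
elim: T => [|T IH]; first by rewrite big_geq // sqrtr0 mulr0.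
rewrite big_nat_recr //=; apply: le_trans (lerD IH (lexx _)) _.
set s := Num.sqrt (T%:R : R); set u := Num.sqrt (T.+1%:R : R).
have s0 : 0 <= s by exact: sqrtr_ge0.
have u0 : 0 < u by rewrite sqrtr_gt0 ltr0n.
have hs : s ^+ 2 = T%:R by rewrite sqr_sqrtr // ler0n.
have hu : u ^+ 2 = T%:R + 1 by rewrite sqr_sqrtr ?ler0n // -natr1.
have tangent : 1 <= 2 * (u - s) * u.
  have : 2 * (u - s) * u - 1 = (u - s) ^+ 2 + (u ^+ 2 - s ^+ 2 - 1) by ring.
  by rewrite hs hu; have := sqr_ge0 (u - s); lra.
have : u^-1 <= 2 * (u - s) by rewrite -[u^-1]mul1r ler_pdivrMr.
lra.
Qed.

Lemma sqrt_le_linear_eventually {R : realType} (K c : R) : 0 < c ->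
  exists T1 : nat, forall T, (T1 <= T)%N -> K * Num.sqrt T%:R <= c * T%:R.
Proof.
move=> c0; exists (Num.truncn ((K / c) ^+ 2)).+1 => T hT.
have Kc : K / c <= Num.sqrt T%:R.
  apply: le_trans (ler_norm _) _; rewrite -sqrtr_sqr ler_sqrt // ltW //.
  by apply: lt_le_trans (truncnS_gt _) _; rewrite ler_nat.
rewrite -[X in _ <= c * X]sqr_sqrtr // expr2 mulrA ler_wpM2r ?sqrtr_ge0 //.
by rewrite mulrC -ler_pdivrMr.
Qed.

Lemma eps_ge0 {R : realType} (kappa alpha : R) t : 0 <= kappa -> 0 <= alpha ->
  0 <= eps kappa alpha t.
Proof. by move=> k0 a0; rewrite /eps divr_ge0 ?mulr_ge0 ?sqrtr_ge0. Qed.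

Lemma inv_add_eps_le {R : realType} (kappa alpha : R) t : (0 < t)%N ->
  t%:R^-1 + eps kappa alpha t <= (1 + kappa * alpha) / Num.sqrt t%:R.
Proof.
move=> t0; rewrite /eps mulrDl mul1r lerD2r.
set u := Num.sqrt (t%:R : R).
have u1 : 1 <= u by rewrite -sqrtr1 ler_sqrt ?ler1n.
by rewrite -[t%:R]sqr_sqrtr // -exprVn expr2 ler_piMr ?invr_ge0 ?invf_le1 // (lt_le_trans ltr01).
Qed.

Lemma sigma_algebra_setT {T : Type} (F : set (set T)) : <<s F >> setT.
Proof. by have [F0 FC _] := smallest_sigma_algebra setT F; have := FC _ F0; rewrite setD0. Qed.

Section generated_sigma_algebras.
Context {R : realType} {d : measure_display} {Omega : measurableType d}.
Variables (Y : nat -> Omega -> bool) (p : nat -> Omega -> R).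

Lemma states_past_measurable t : (forall s, measurable [set w | Y s w]) ->
  (forall s, measurable_fun setT (p s)) -> <<s states_past_gen Y p t >> `<=` measurable.
Proof.
move=> mY mp; apply: smallest_sub; first exact: sigma_algebra_measurable.
move=> A [[s [_ ->]]|[s [B [_ [mB ->]]]]]; first exact: mY.
by rewrite -[_ @^-1` _]setTI; exact: mp.
Qed.

Lemma past_p_sub_states_past t : <<s past_p_gen p t >> `<=` <<s states_past_gen Y p t >>.
Proof. by apply: sub_sigma_algebra2 => A pA; right. Qed.

Lemma indep_uniform_cdf (P : probability Omega R) (Z : nat -> Omega -> R) :
  (forall A, <<s all_Yp_gen Y p >> A ->
     forall (s : seq nat) (x : nat -> R), uniq s -> all (fun i => 0 < i)%N s ->
     (forall i, 0 <= x i <= 1) ->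
     P (A `&` \bigcap_(i in [set` s]) [set w | Z i w <= x i]) =
       (P A * \prod_(i <- s) (x i)%:E)%E) ->
  forall t, (0 < t)%N -> forall c, 0 <= c <= 1 -> P [set w | Z t w <= c] = c%:E.
Proof.
move=> Z_indep t t0 c c01.
have t_pos : all (fun i => 0 < i)%N [:: t] by rewrite /= t0.
have := Z_indep _ (sigma_algebra_setT _) [:: t] (fun _ => c) isT t_pos (fun _ => c01).
rewrite setTI probability_setT mul1e big_seq1 => <-.
congr (P _); apply/seteqP; split=> w /=; last by apply; rewrite /= mem_seq1.
by move=> Zc i /=; rewrite mem_seq1 => /eqP ->.
Qed.

End generated_sigma_algebras.

Lemma linear_growth_of_sqrt_close {R : realType} {f g : nat -> R} {c C M : R} {T0 : nat} :
  0 < c -> 0 < M -> (forall T, (T0 <= T)%N -> c * T%:R <= f T) ->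
  (forall T, `|g T - f T| <= C * Num.sqrt T%:R) -> (forall T, g T <= M * T%:R) ->
  exists c1 c2 T1, 0 < c1 /\ 0 < c2 /\ forall T, (T1 <= T)%N -> c1 * T%:R <= g T <= c2 * T%:R.
Proof.
move=> c0 M0 f_ge g_close g_le.
have [T1 dominated] := sqrt_le_linear_eventually C (c / 2) (divr_gt0 c0 (ltr0Sn _ 1)).
exists (c / 2), M, (maxn T0 T1); do 2 (split; first lra).
move=> T; rewrite geq_max => /andP[/f_ge lower /dominated upper].
have := g_close T; rewrite ler_norml => /andP[close _].
by rewrite g_le andbT; lra.
Qed.

Section domt.
Context {R : realType} {d : measure_display} {Omega : measurableType d}.
Variables (P : probability Omega R) (Y : nat -> Omega -> bool) (p Z : nat -> Omega -> R)
  (G : R -> R) (L : R) (lb : nat -> Omega -> R) (kappa alpha a b : R).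
Hypotheses (mY : forall t, measurable [set w | Y t w])
  (mp : forall t, measurable_fun setT (p t)) (mZ : forall t, measurable_fun setT (Z t))
  (G1 : G 1 = 1) (L1 : 1 <= L)
  (G_lip : forall x z, 0 <= x <= 1 -> 0 <= z <= 1 -> `|G x - G z| <= L * `|x - z|)
  (p_cdf : forall t, (1 <= t)%N -> forall A, <<s states_past_gen Y p t >> A ->
     forall x, 0 <= x <= 1 ->
     P (A `&` [set w | p t w <= x]) =
       (P (A `&` [set w | ~~ Y t w]) * x%:E + P (A `&` [set w | Y t w]) * (G x)%:E)%E)
  (Z_indep : forall A, <<s all_Yp_gen Y p >> A ->
     forall (s : seq nat) (x : nat -> R), uniq s -> all (fun i => 0 < i)%N s ->
     (forall i, 0 <= x i <= 1) ->
     P (A `&` \bigcap_(i in [set` s]) [set w | Z i w <= x i]) =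
       (P A * \prod_(i <- s) (x i)%:E)%E)
  (lb01 : forall t w, 0 <= lb t w <= 1)
  (lb_past : forall t B, measurable B -> <<s past_p_gen p t >> (lb t @^-1` B))
  (kappa0 : 0 <= kappa) (alpha0 : 0 <= alpha) (a0 : 0 <= a) (b0 : 0 <= b).

Let Sg t := <<s states_past_gen Y p t >>.

Let SgM t : Sg t `<=` measurable := states_past_measurable _ _ t mY mp.

Let lbSg t B : measurable B -> Sg t (lb t @^-1` B).
Proof. by move=> mB; apply: past_p_sub_states_past; exact: lb_past. Qed.

Let mlb t : measurable_fun setT (lb t).
Proof. by move=> _ B mB; rewrite setTI; apply: SgM; exact: lbSg. Qed.

Lemma measurable_decB t : measurable [set w | decB p lb t w].
Proof. exact: measurable_ler (mp t) (mlb t). Qed.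

Lemma measurable_decD t : measurable [set w | decD kappa alpha p lb Z t w].
Proof.
rewrite /decD /lamD; apply: measurable_ler => //.
apply: measurable_minr; first exact: measurable_cst.
by apply: measurable_funD => //; exact: measurable_funM.
Qed.

Lemma Pr_decD_neq_decB_le t : (0 < t)%N ->
  Pr P [set w | decD kappa alpha p lb Z t w != decB p lb t w] <=
  L * (1 + kappa * alpha) / Num.sqrt t%:R.
Proof.
move=> t0; rewrite -mulrA.
apply: le_trans (ler_wpM2l (le_trans ler01 L1) (inv_add_eps_le kappa alpha t t0)).
apply: (Pr_perturbed_threshold_neq_le P (Y t) (p t) G L (Sg t)) => //.
- exact: sigma_algebra_setT.
- exact: p_cdf.
- exact: lbSg.
- exact: Pr_uniform_outside_unit (indep_uniform_cdf _ _ _ _ Z_indep _ t0).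
- exact: eps_ge0.
Qed.

Lemma Expect_Regret_decD_decB_le T :
  `|Expect P (Regret a b Y (decD kappa alpha p lb Z) T) - Expect P (Regret a b Y (decB p lb) T)|
  <= 2 * ((a + b) * (L * (1 + kappa * alpha))) * Num.sqrt T%:R.
Proof.
have sum_le : \sum_(1 <= t < T.+1) Pr P [set w | decD kappa alpha p lb Z t w != decB p lb t w]
    <= L * (1 + kappa * alpha) * (2 * Num.sqrt T%:R).
  apply: le_trans (ler_sum_nat (G := fun t => L * (1 + kappa * alpha) / Num.sqrt t%:R) _) _.
    by move=> t /andP[t1 _]; exact: Pr_decD_neq_decB_le.
  rewrite -mulr_sumr ler_wpM2l ?sum_inv_sqrt_le //.
  by rewrite mulr_ge0 ?addr_ge0 ?mulr_ge0 ?(le_trans ler01 L1).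
have := Expect_Regret_dist_le P a b Y a0 b0 mY _ _ T measurable_decD measurable_decB.
move/le_trans; apply; apply: le_trans (ler_wpM2l (addr_ge0 a0 b0) sum_le) _.
by rewrite le_eqVlt; apply/orP; left; apply/eqP; ring.
Qed.

End domt.

Theorem corollary2 (R : realType) (d : measure_display) (Omega : measurableType d)
  (P : probability Omega R)
  (Y : nat -> Omega -> bool) (p : nat -> {RV P >-> R}) (Z : nat -> {RV P >-> R})
  (G : R -> R) (L : R) (lb : nat -> Omega -> R) (eta kappa alpha a b : R) :
  (* states are measurable *)
  (forall t, measurable [set w | Y t w]) ->
  (* G: continuous, strictly increasing CDF on [0,1], G(0)=0, G(1)=1, L-Lipschitz, L >= 1 *)
  {within [set x : R | 0 <= x <= 1], continuous G} ->
  (forall x y, 0 <= x -> x < y -> y <= 1 -> G x < G y) ->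
  G 0 = 0 -> G 1 = 1 -> 1 <= L ->
  (forall x y, 0 <= x <= 1 -> 0 <= y <= 1 -> `|G x - G y| <= L * `|x - y|) ->
  (* conditionally on the states and the past, p_t ~ Unif[0,1] if Y_t = 0, p_t ~ G if Y_t = 1 *)
  (forall t, (1 <= t)%N -> forall A, <<s states_past_gen Y (fun s => p s) t >> A ->
     forall x, 0 <= x <= 1 ->
     P (A `&` [set w | p t w <= x]) =
       (P (A `&` [set w | ~~ Y t w]) * x%:E + P (A `&` [set w | Y t w]) * (G x)%:E)%E) ->
  (* Z_t i.i.d. Uniform[0,1], independent of everything else *)
  (forall A, <<s all_Yp_gen Y (fun s => p s) >> A ->
     forall (s : seq nat) (x : nat -> R), uniq s -> all (fun i => 0 < i)%N s ->
     (forall i, 0 <= x i <= 1) ->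
     P (A `&` \bigcap_(i in [set` s]) [set w | Z i w <= x i]) =
       (P A * \prod_(i <- s) (x i)%:E)%E) ->
  (* base thresholds: in [0,1], computed from the virtual history *)
  (forall t w, 0 <= lb t w <= 1) ->
  (forall t (B : set R), measurable B -> <<s past_p_gen (fun s => p s) t >> (lb t @^-1` B)) ->
  (* liminf_T R_T^base / T >= eta a.s., eta > 0 *)
  0 < eta ->
  {ae P, forall w, eta <= limn_inf (fun T : nat =>
     Rcount (decB (fun s => p s) lb) T w / T%:R)} ->
  (* DOMT parameters and regret weights *)
  0 <= kappa -> 0 < alpha < 1 -> 0 < a -> 0 < b ->
  (* E[Regret_T^base(a,b)] = Omega(T) *)
  (exists c T0, 0 < c /\ forall T, (T0 <= T)%N ->
     c * T%:R <= Expect P (Regret a b Y (decB (fun s => p s) lb) T)) ->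
  (* conclusion 1: E[Regret^DOMT] = E[Regret^base] + O(sqrt T) *)
  (exists C T0, forall T, (T0 <= T)%N ->
     `|Expect P (Regret a b Y (decD kappa alpha (fun s => p s) lb (fun s => Z s)) T)
       - Expect P (Regret a b Y (decB (fun s => p s) lb) T)| <= C * Num.sqrt T%:R) /\
  (* conclusion 2: E[Regret^DOMT] = Theta(T) *)
  (exists c1 c2 T0, 0 < c1 /\ 0 < c2 /\ forall T, (T0 <= T)%N ->
     c1 * T%:R <= Expect P (Regret a b Y (decD kappa alpha (fun s => p s) lb (fun s => Z s)) T)
     <= c2 * T%:R).
Proof.
move=> mY _ _ _ G1 L1 G_lip p_cdf Z_indep lb01 lb_past _ _ kappa0 /andP[alpha0 _] a0 b0
  [c [T0 [c0 base_linear]]].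
have mp s : measurable_fun setT (p s) := measurable_funPT (p s).
have mZ s : measurable_fun setT (Z s) := measurable_funPT (Z s).
have close := Expect_Regret_decD_decB_le P Y _ _ G L lb kappa alpha a b mY mp mZ G1 L1 G_lip p_cdf Z_indep lb01 lb_past
  kappa0 (ltW alpha0) (ltW a0) (ltW b0).
split; first by exists (2 * ((a + b) * (L * (1 + kappa * alpha)))), 0%N.
apply: (linear_growth_of_sqrt_close (M := a + b) c0 _ base_linear close).
  by rewrite addr_gt0.
by move=> T; apply: Expect_Regret_le; rewrite ?ltW //; exact: measurable_decD.
Qed.
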